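(* Let $\sigma,\eta>0$ and $\mathscr{C}$ be a family of balls as in the context. There exists a constant $C=C(\mathscr{C})>0$ such that $|B|^{1/3}\le C(1+|x_B|)$ for all $B\in\mathscr{C}$.
   Context: Cover: for constants $\sigma,\eta>0$, $\mathscr{C}$ is a family of closed balls in $\mathbb{R}^3$ with $\bigcup_{B\in\mathscr{C}}B=\mathbb{R}^3$ and $|B|\geq 4\pi/3$ for all $B\in\mathscr{C}$, such that (i) each ball in $\mathscr{C}$ intersects at most $\sigma$ balls in $\mathscr{C}$, and (ii) if $B,B'\in\mathscr{C}$ intersect then $\eta^{-1}\le |B|^{1/3}/|B'|^{1/3}\le\eta$. Here $|B|$ is the volume and $x_B$ the center of $B$. *)

From HB Require Import structures.
From mathcomp Require Import all_boot all_order all_algebra.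
From mathcomp Require Import all_classical all_reals all_analysis.
Set Implicit Arguments. Unset Strict Implicit. Unset Printing Implicit Defensive.
Import Order.TTheory GRing.Theory Num.Theory.
Local Open Scope ring_scope.
Local Open Scope classical_set_scope.

Definition point (R : realType) := 'rV[R]_3.

Definition enorm (R : realType) (x : point R) : R :=
  Num.sqrt (\sum_(i < 3) (x ord0 i) ^+ 2).

Definition ball3 (R : realType) := (point R * R)%type.

Definition bcenter (R : realType) (B : ball3 R) : point R := B.1.
Definition bradius (R : realType) (B : ball3 R) : R := B.2.

Definition cball (R : realType) (B : ball3 R) : set (point R) :=
  [set y | enorm (y - bcenter B) <= bradius B].

Definition vol (R : realType) (B : ball3 R) : R :=
  4 / 3 * pi * bradius B ^+ 3.

Definition intersect (R : realType) (B B' : ball3 R) : Prop :=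
  cball B `&` cball B' !=set0.

Definition is_cover (R : realType) (sigma eta : R) (C : set (ball3 R)) : Prop :=
  (forall B, C B -> 0 < bradius B) /\
  (forall y : point R, exists2 B, C B & cball B y) /\
  (forall B, C B -> 4 / 3 * pi <= vol B) /\
  (* (i) each ball in C intersects at most sigma balls in C *)
  (forall B, C B -> forall s : seq (ball3 R), uniq s ->
      (forall B', B' \in s -> C B' /\ intersect B B') -> (size s)%:R <= sigma) /\
  (* (ii) neighbouring balls have comparable size *)
  (forall B B', C B -> C B' -> intersect B B' ->
      eta^-1 <= vol B `^ (3^-1) / vol B' `^ (3^-1) <= eta).

From Pilot Require Import Defs.
From HB Require Import structures.
From mathcomp Require Import all_boot all_order all_algebra.
From mathcomp Require Import all_classical all_reals all_analysis.
From mathcomp Require Import lra.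
Import Order.TTheory GRing.Theory Num.Theory.
Local Open Scope ring_scope.

(* Fix a ball B0 of the cover containing the origin. A ball B of the cover
   either contains the origin, and then it meets B0, so that condition (ii)
   gives |B|^(1/3) <= eta |B0|^(1/3); or it does not, and then its radius is
   less than |x_B|, while |B|^(1/3) <= 2 r_B since 4 pi / 3 <= 8. *)

Section BallVolumes.
Set Implicit Arguments.
Unset Strict Implicit.
Variable R : realType.

Lemma powR_invSn_le (x y : R) (n : nat) :
  0 <= x -> 0 <= y -> x <= y ^+ n.+1 -> x `^ (n.+1%:R)^-1 <= y.
Proof.
move=> x_ge0 y_ge0 le_xy.
have -> : y = (y ^+ n.+1) `^ (n.+1%:R)^-1.
  by rewrite -powR_mulrn // -powRrM mulfV ?powRr1.
by apply: ge0_ler_powR; rewrite // ?nnegrE ?invr_ge0 ?exprn_ge0.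
Qed.

Lemma pi_lt4 : pi < 4 :> R.
Proof. by have := @pihalf_lt2 R; rewrite ltr_pdivrMr //; lra. Qed.

Lemma enormN (x : Defs.point R) : enorm (- x) = enorm x.
Proof.
by rewrite /enorm; congr Num.sqrt; apply: eq_bigr => i _; rewrite !mxE sqrrN.
Qed.

Lemma cball0 (B : ball3 R) : cball B 0 = (enorm (bcenter B) <= bradius B).
Proof. by rewrite /cball /= sub0r enormN. Qed.

Lemma vol_gt0 (B : ball3 R) : 0 < bradius B -> 0 < vol B.
Proof. by move=> r_gt0; rewrite /vol !mulr_gt0 ?pi_gt0 ?exprn_gt0. Qed.

Lemma vol_root_le (B : ball3 R) :
  0 <= bradius B -> vol B `^ 3^-1 <= 2 * bradius B.
Proof.
move=> r_ge0; apply: powR_invSn_le; rewrite ?mulr_ge0 ?pi_ge0 ?exprn_ge0 //.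
rewrite /vol exprMn ler_wpM2r ?exprn_ge0 //.
by have := pi_lt4; lra.
Qed.

Lemma cover_vol_root_le (sigma eta : R) (C : set (ball3 R)) (B B' : ball3 R) :
  is_cover sigma eta C -> C B -> C B' -> intersect B B' ->
  vol B `^ 3^-1 <= eta * vol B' `^ 3^-1.
Proof.
move=> [r_gt0 [_ [_ [_ comparable]]]] CB CB' meet.
have /andP[_] := comparable B B' CB CB' meet.
by rewrite ler_pdivrMr // powR_gt0 // vol_gt0 // r_gt0.
Qed.

End BallVolumes.

Theorem corollary3p3 (R : realType) (sigma eta : R) (C : set (ball3 R)) :
  0 < sigma -> 0 < eta -> is_cover sigma eta C ->
  exists2 K : R, 0 < K &
    forall B, C B -> vol B `^ (3^-1) <= K * (1 + enorm (bcenter B)).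
Proof.
move=> _ _ coverC; have [r_gt0 [covers _]] := coverC.
have [B0 CB0 B0_0] := covers 0.
set K := Num.max (eta * vol B0 `^ 3^-1) 2.
have K_ge2 : 2 <= K by rewrite le_max lexx orbT.
have K_ge : eta * vol B0 `^ 3^-1 <= K by rewrite le_max lexx.
exists K => [|B CB]; first by apply: lt_le_trans K_ge2.
have x_ge0 : 0 <= enorm (bcenter B) by apply: sqrtr_ge0.
have [B_0 | far] := leP (enorm (bcenter B)) (bradius B).
  have meet : intersect B B0 by exists 0; split; rewrite // cball0.
  apply: (le_trans (cover_vol_root_le coverC CB CB0 meet)).
  by apply: (le_trans K_ge); nra.
apply: (le_trans (vol_root_le (ltW (r_gt0 B CB)))); nra.
Qed.
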